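(* Let $G$ be a non-amenable discrete group and $\partial_F G$ its Furstenberg boundary. For every unital positive isometric $G$-equivariant embedding $\iota: C(\partial_F G)\to\ell^\infty(G)$, we have $\iota(C(\partial_F G))\cap c_0(G)=\{0\}$.
   Context: $\ell^\infty(G)$ carries the left translation action of $G$; $c_0(G)$ is the space of functions on $G$ vanishing at infinity. The Furstenberg boundary $\partial_F G$ is the universal $G$-boundary (minimal, strongly proximal compact $G$-space of which every $G$-boundary is a continuous equivariant image). *)

From mathcomp Require Import all_boot all_order all_algebra.
From mathcomp Require Import all_classical all_reals topology normedtype.
From mathcomp Require Import complex.
Import GRing.Theory Num.Theory numFieldTopology.Exports.

Set Implicit Arguments.
Unset Strict Implicit.
Unset Printing Implicit Defensive.

Local Open Scope ring_scope.
Local Open Scope classical_set_scope.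

Definition is_group (G : Type) (mul : G -> G -> G) (one : G) (inv : G -> G) :=
  [/\ forall a b c, mul a (mul b c) = mul (mul a b) c,
      forall a, mul one a = a,
      forall a, mul a one = a,
      forall a, mul (inv a) a = one &
      forall a, mul a (inv a) = one].

Section Defs.
Variable R : realType.
Variable G : Type.
Variables (mul : G -> G -> G) (one : G) (inv : G -> G).

Local Notation normc := (@Normc.normc R).

Definition rbounded (f : G -> R) := exists M : R, forall g, `|f g| <= M.

Definition linfty (phi : G -> R[i]) := exists M : R, forall g, normc (phi g) <= M.

Definition c0 (phi : G -> R[i]) :=
  forall e : R, 0 < e -> finite_set [set g | e <= normc (phi g)].

Definition amenable :=
  exists m : (G -> R) -> R,
    [/\ forall (a : R) f1 f2, rbounded f1 -> rbounded f2 ->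
          m (fun h => a * f1 h + f2 h) = a * m f1 + m f2,
        forall f, rbounded f -> (forall h, 0 <= f h) -> 0 <= m f,
        m (fun _ => 1) = 1 &
        forall g f, rbounded f -> m (fun h => f (mul (inv g) h)) = m f].

Section Space.
Variable X : topologicalType.

Definition is_action (act : G -> X -> X) :=
  [/\ forall x, act one x = x,
      forall g h x, act (mul g h) x = act g (act h x) &
      forall g, continuous (act g)].

Definition ccont (f : X -> R[i]) :=
  continuous (fun x => complex.Re (f x) : R) /\ continuous (fun x => complex.Im (f x) : R).

(* probability measures on the compact space X, viewed (Riesz) as states on
   C(X, R): positive unital linear functionals *)
Definition state (mu : (X -> R) -> R) :=
  [/\ forall (a : R) (f1 f2 : X -> R), continuous f1 -> continuous f2 ->
        mu (fun x => a * f1 x + f2 x) = a * mu f1 + mu f2,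
      forall f : X -> R, continuous f -> (forall x, 0 <= f x) -> 0 <= mu f &
      mu (fun _ => 1) = 1].

(* the point mass delta_x0 lies in the weak* closure of the orbit
   {g.mu | g in G}, where (g.mu)(f) = mu(f o g) *)
Definition dirac_in_orbit_closure (act : G -> X -> X) (mu : (X -> R) -> R) (x0 : X) :=
  forall (fs : seq (X -> R)) (e : R), (forall f : X -> R, f \in fs -> continuous f) -> 0 < e ->
    exists g : G, forall f, f \in fs -> `|mu (fun x => f (act g x)) - f x0| < e.

Definition G_boundary (act : G -> X -> X) :=
  [/\ compact [set: X], hausdorff_space X, inhabited X & is_action act] /\
  (forall x : X, closure [set act g x | g in [set: G]] = [set: X]) /\
  (forall mu, state mu -> exists x0 : X, dirac_in_orbit_closure act mu x0).
End Space.

Definition furstenberg_boundary (X : topologicalType) (act : G -> X -> X) :=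
  G_boundary act /\
  forall (Y : topologicalType) (actY : G -> Y -> Y), G_boundary actY ->
    exists p : X -> Y, [/\ continuous p, (forall y, exists x, p x = y) &
                          forall g x, p (act g x) = actY g (p x)].

Definition upi_equivariant_embedding (X : topologicalType) (act : G -> X -> X)
    (iota : (X -> R[i]) -> (G -> R[i])) :=
  (forall (a : R[i]) f1 f2, ccont f1 -> ccont f2 ->
        iota (fun x => a * f1 x + f2 x) = (fun g => a * iota f1 g + iota f2 g)) /\
  (forall f, ccont f -> linfty (iota f)) /\
  [/\
      iota (fun _ => 1) = (fun _ => 1),
      forall f, ccont f -> (forall x, 0 <= f x) -> forall g, 0 <= iota f g,
      (* isometric for the sup norms: same upper bounds for |f| and |iota f| *)
      forall f, ccont f -> forall r : R,
        (forall x, normc (f x) <= r) <-> (forall g, normc (iota f g) <= r) &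
      forall f, ccont f -> forall g,
        iota (fun x => f (act (inv g) x)) = (fun h => iota f (mul (inv g) h))].

End Defs.

(* Suppose [f <> 0], say [|f x1| = c > 0], while [iota f] vanishes at infinity.
   By minimality and compactness, finitely many translates [k^-1 O] ([k] in [D])
   of [O = {|f| > c/2}] cover [X].  If the state [phi |-> iota phi h] on [C(X)]
   is close to a point mass [delta_x] on the functions [Re f o k], [Im f o k]
   ([k] in [D]), then [iota f (k h)] is close to [f (k x)] for the [k] with
   [k x] in [O], so [|iota f (k h)| >= c/4] for some [k] in [D]; such [h]
   form a finite set [S] because [iota f] vanishes at infinity.  Strong
   proximality puts states of the form [phi |-> iota phi h] in every weak*
   neighbourhood of some [delta_x0]; as [S] is finite, one of them, at [t],
   equals [delta_x0].  By equivariance the state at [g t] is then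
   [delta_(g x0)] for every [g], so [g t] lies in [S]: [G] is finite, hence
   amenable. *)

From HB Require Import structures.
From mathcomp Require Import all_boot all_order all_algebra finmap.
From mathcomp Require Import all_classical all_reals topology normedtype realfun.
From mathcomp Require Import complex lra.
Import Order.TTheory GRing.Theory Num.Theory numFieldTopology.Exports.

Set Implicit Arguments.
Unset Strict Implicit.
Unset Printing Implicit Defensive.

Local Open Scope ring_scope.
Local Open Scope classical_set_scope.

Section Group.
Variables (G : Type) (mul : G -> G -> G) (one : G) (inv : G -> G).
Hypothesis hG : is_group mul one inv.

Lemma group_mulKg a b : mul (inv a) (mul a b) = b.
Proof. by case: hG => mulA mul1g _ mulVg _; rewrite mulA mulVg mul1g. Qed.

Lemma group_mulgK a b : mul (mul a b) (inv b) = a.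
Proof. by case: hG => mulA _ mulg1 _ mulgV; rewrite -mulA mulgV mulg1. Qed.

Lemma group_invK : involutive inv.
Proof.
move=> a; case: hG => _ _ mulg1 mulVg _.
by rewrite -[inv (inv a)]mulg1 -(mulVg a) group_mulKg.
Qed.

Lemma finite_left_translates (D : {fset {classic G}}) (T : set G) :
  finite_set T -> finite_set [set h | exists2 k, k \in D & T (mul k h)].
Proof.
move=> finT.
apply: (@sub_finite_set _ _ (\bigcup_(k in [set` D]) [set mul (inv k) y | y in T])).
  by move=> h [k kD Tkh]; exists k => //; exists (mul k h); rewrite ?group_mulKg.
by apply: bigcup_finite; [exact: finite_fset | move=> k _; exact: finite_image].
Qed.

Lemma finite_right_translate (t : G) (S : set G) :
  finite_set S -> finite_set [set g | S (mul g t)].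
Proof.
move=> finS; apply: (@sub_finite_set _ _ [set mul y (inv t) | y in S]).
  by move=> g Sgt; exists (mul g t); rewrite ?group_mulgK.
exact: finite_image.
Qed.

Lemma finite_group_amenable (R : realType) :
  finite_set [set: G] -> amenable R mul inv.
Proof.
move=> finG; case: hG => mulA mul1g _ mulVg mulgV.
pose sum (f : G -> R) := \sum_(g \in [set: {classic G}]) f g.
have sum_gt0 : 0 < sum (fun _ => 1).
  rewrite /sum (fsbigD1 (one : {classic G})) //=.
  by rewrite ltr_pwDl ?ltr01 //; exact: fsumr_ge0.
have sum_translate g f : sum (fun h => f (mul (inv g) h)) = sum f.
  rewrite /sum [RHS](reindex_fsbigT (mul (inv g) : {classic G} -> {classic G})) //.
  exists (mul g) => h; last exact: group_mulKg.
  by rewrite -{1}(group_invK g) group_mulKg.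
exists (fun f => sum f / sum (fun _ => 1)); split.
- by move=> a f1 f2 _ _; rewrite /sum fsbig_split // -mulr_fsumr mulrDl mulrA.
- by move=> f _ f0; rewrite divr_ge0 ?fsumr_ge0 // ltW.
- by rewrite divff // gt_eqF.
- by move=> g f _; rewrite sum_translate.
Qed.

End Group.

(* [compact_cover] is only available for pointed spaces, hence this copy of [X]. *)
Definition pointed_at (X : topologicalType) (x : X) : Type := X.
HB.instance Definition _ (X : topologicalType) (x : X) :=
  Topological.copy (pointed_at x) X.
HB.instance Definition _ (X : topologicalType) (x : X) :=
  isPointed.Build (pointed_at x) x.

Lemma compact_finite_subcover (X : topologicalType) (I : choiceType)
    (F : I -> set X) :
  compact [set: X] -> (forall i, open (F i)) -> (forall x, exists i, F i x) ->
  exists D : {fset I}, forall x, exists2 i, i \in D & F i x.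
Proof.
move=> cptX Fo cov; have [[x _]|noX] := pselect (exists x : X, True); last first.
  by exists fset0 => x; case: noX; exists x.
have : compact [set: pointed_at x] by [].
rewrite compact_cover => /(_ I [set: I] F (fun i _ => Fo i)) [].
  by move=> y _; have [i Fiy] := cov y; exists i.
by move=> D _ DF; exists D => y; have [i Di Fiy] := DF y Logic.I; exists i.
Qed.

Lemma minimal_finite_translates_cover (G : Type) (X : topologicalType)
    (act : G -> X -> X) (O : set X) :
  compact [set: X] -> (forall g, continuous (act g)) ->
  (forall x, closure [set act g x | g in [set: G]] = [set: X]) ->
  open O -> O !=set0 ->
  exists D : {fset {classic G}}, forall x, exists2 k, k \in D & O (act k x).
Proof.
move=> cptX act_cont minimal Oo [x1 Ox1].
apply: (@compact_finite_subcover _ {classic G} (fun k => act k @^-1` O)) => //.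
  by move=> k; apply: open_comp => // y _; exact: act_cont.
move=> x; have : closure [set act g x | g in [set: G]] x1 by rewrite minimal.
by move=> /(_ O (open_nbhs_nbhs (conj Oo Ox1))) [_ [[k _ <-] Okx]]; exists k.
Qed.

Local Notation normc := (@Normc.normc _).

Lemma normc_le_Re_Im (R : rcfType) (z : R[i]) :
  normc z <= `|complex.Re z| + `|complex.Im z|.
Proof.
case: z => a b /=.
have nonneg : 0 <= `|a| + `|b| by rewrite addr_ge0.
rewrite -(ger0_norm nonneg) -(sqrtr_sqr (`|a| + `|b|)) ler_sqrt ?sqr_ge0 //.
by rewrite sqrrD !real_normK ?num_real // -addrA lerD2l lerDr mulrn_wge0 ?mulr_ge0.
Qed.

Lemma normc_approx (R : rcfType) (z w : R[i]) (e : R) :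
  `|complex.Re w - complex.Re z| < e -> `|complex.Im w - complex.Im z| < e ->
  normc z - e *+ 2 < normc w.
Proof.
move=> near_Re near_Im; have := le_normcD w (z - w); rewrite addrC subrK.
have : normc (z - w) < e *+ 2.
  apply: le_lt_trans (normc_le_Re_Im _) _.
  move: near_Re near_Im; case: z w => a b [c d] /=.
  by rewrite mulr2n !(distrC c) !(distrC d); exact: ltrD.
by move=> ? ?; lra.
Qed.

Lemma normc_ge0 (R : rcfType) (z : R[i]) : 0 <= normc z.
Proof. by case: z => a b; exact: sqrtr_ge0. Qed.

Lemma normc_gt0 (R : rcfType) (z : R[i]) : z != 0 -> 0 < normc z.
Proof.
by rewrite lt_def normc_ge0 andbT; apply: contra => /eqP/Normc.eq0_normc->.
Qed.

Lemma normc_real (R : rcfType) (r : R) : normc r%:C%C = `|r|.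
Proof. by rewrite /= expr0n addr0 sqrtr_sqr. Qed.

Lemma ccont_normc (R : realType) (X : topologicalType) (f : X -> R[i]) :
  ccont f -> continuous (fun x => normc (f x)).
Proof.
case=> Re_cont Im_cont x.
have -> : (fun x => normc (f x)) =
    Num.sqrt \o (fun x => complex.Re (f x) * complex.Re (f x)
                          + complex.Im (f x) * complex.Im (f x)).
  by apply/funext => y /=; case: (f y) => a b /=; rewrite !expr2.
apply: continuous_comp; last exact: sqrt_continuous.
apply: (@continuousD _ R^o); apply: continuousM.
- exact: Re_cont.
- exact: Re_cont.
- exact: Im_cont.
- exact: Im_cont.
Qed.

Lemma exists_pos_lower_bound (R : realDomainType) (T : eqType) (s : seq T)
    (d : T -> R) (e : R) :
  (forall t, t \in s -> 0 < d t) -> 0 < e ->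
  exists e', [/\ 0 < e', e' <= e & forall t, t \in s -> e' <= d t].
Proof.
elim: s e => [|a s IH] e d_gt0 e_gt0; first by exists e.
have [|e' [e'_gt0 e'_le d_ge]] := IH e _ e_gt0.
  by move=> t st; apply: d_gt0; rewrite in_cons st orbT.
exists (Num.min e' (d a)); split; first by rewrite lt_min e'_gt0 d_gt0 ?mem_head.
  by rewrite ge_min e'_le.
move=> t; rewrite in_cons ge_min => /orP[/eqP->|st]; first by rewrite lexx orbT.
by rewrite d_ge.
Qed.

Section DiracApproximation.
Variables (R : realType) (X : topologicalType).

Definition approx_dirac (nu : (X -> R) -> R) (x : X) (fs : seq (X -> R))
    (e : R) :=
  forall phi, phi \in fs -> `|nu phi - phi x| < e.

Lemma approx_dirac_sub nu x fs fs' e e' :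
  {subset fs' <= fs} -> e <= e' ->
  approx_dirac nu x fs e -> approx_dirac nu x fs' e'.
Proof. by move=> sub le_e near phi /sub/near/lt_le_trans; apply. Qed.

(* Each [nu i] other than [delta_x], [i] in [S], is separated from [delta_x]
   by one continuous function; finitely many of them give a weak*
   neighbourhood of [delta_x] that no [nu i] can enter. *)
Lemma dirac_of_finite_approximants (I : choiceType) (nu : I -> (X -> R) -> R)
    (x : X) (S : set I) (fs0 : seq (X -> R)) (e0 : R) :
  finite_set S -> (forall phi, phi \in fs0 -> continuous phi) -> 0 < e0 ->
  (forall i, approx_dirac (nu i) x fs0 e0 -> S i) ->
  (forall fs e, (forall phi, phi \in fs -> continuous phi) -> 0 < e ->
     exists i, approx_dirac (nu i) x fs e) ->
  exists i, forall phi, continuous phi -> nu i phi = phi x.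
Proof.
move=> finS fs0_cont e0_gt0 fs0_S approx; apply: contrapT => no_dirac.
have separate i : exists phi : X -> R, S i -> continuous phi /\ nu i phi != phi x.
  have [Si|] := pselect (S i); last by exists (fun=> 0).
  have : ~ forall phi, continuous phi -> nu i phi = phi x.
    by move=> nu_i_dirac; apply: no_dirac; exists i.
  by move=> /existsNP [phi /not_implyP [phi_cont /eqP neq]]; exists phi.
have [phi_ phi_P] := choice separate.
have memS i : i \in fset_set S -> S i by rewrite (in_fset_set finS) inE.
pose gap i := `|nu i (phi_ i) - phi_ i x|.
have [|e [e_gt0 e_le0 e_le]] :=
  @exists_pos_lower_bound _ _ (fset_set S) gap e0 _ e0_gt0.
  by move=> i /memS Si; rewrite normr_gt0 subr_eq0; case: (phi_P i Si).
have [|i near_i] := approx (fs0 ++ map phi_ (fset_set S)) e _ e_gt0.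
  move=> phi; rewrite mem_cat => /orP[/fs0_cont//|/mapP[i /memS Si ->]].
  by case: (phi_P i Si).
have Si : S i.
  apply/fs0_S/(approx_dirac_sub _ e_le0 near_i) => phi fs0_phi.
  by rewrite mem_cat fs0_phi.
have Si_mem : i \in fset_set S by rewrite in_fset_set ?inE.
have := near_i (phi_ i); rewrite mem_cat (map_f _ Si_mem) orbT => /(_ isT).
by rewrite ltNge e_le.
Qed.

End DiracApproximation.

Section Embedding.
Variables (R : realType) (G : Type) (mul : G -> G -> G) (one : G) (inv : G -> G).
Hypothesis hG : is_group mul one inv.
Variables (X : topologicalType) (act : G -> X -> X).
Variable emb : (X -> R[i]) -> G -> R[i].
Hypothesis hemb : upi_equivariant_embedding mul inv act emb.

Definition embR (phi : X -> R) (g : G) : R :=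
  complex.Re (emb (fun x => (phi x)%:C%C) g).

Lemma ccont_cst (z : R[i]) : ccont (fun _ : X => z).
Proof. by split; exact: cst_continuous. Qed.

Lemma ccont_real (phi : X -> R) : continuous phi -> ccont (fun x => (phi x)%:C%C).
Proof. by split => //=; exact: cst_continuous. Qed.

Lemma emb_cst (z : R[i]) : emb (fun _ => z) = fun _ => z.
Proof.
case: hemb => lin [_ [emb1 _ _ _]].
have := lin (z - 1) _ _ (ccont_cst 1) (ccont_cst 1).
by rewrite emb1 mulr1 subrK => ->.
Qed.

(* Positivity of [emb] on [phi + M >= 0], [M] a bound for [|phi|], forces
   [emb phi] to be real. *)
Lemma Im_emb_real (phi : X -> R) g :
  continuous phi -> complex.Im (emb (fun x => (phi x)%:C%C) g) = 0.
Proof.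
case: hemb => lin [bdd [_ pos iso _]] phi_cont.
have [M /(iso _ (ccont_real phi_cont) M) le_M] := bdd _ (ccont_real phi_cont).
have shift_cont : continuous (fun x => phi x + M).
  by move=> x; apply: (@continuousD _ R^o); [exact: phi_cont | exact: cst_continuous].
have shift_ge0 x : 0 <= (phi x + M)%:C%C.
  by have := le_M x; rewrite normc_real ler_norml lecR -lerBlDr sub0r => /andP[].
have := pos _ (ccont_real shift_cont) shift_ge0 g.
have -> : (fun x => (phi x + M)%:C%C) = (fun x => 1 * (phi x)%:C%C + M%:C%C).
  by apply/funext => x; rewrite mul1r rmorphD.
rewrite (lin _ _ _ (ccont_real phi_cont) (ccont_cst _)) emb_cst mul1r.
by case: (emb _ g) => a b; rewrite lecE /= addr0 => /andP[/eqP].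
Qed.

Lemma emb_ReIm (f : X -> R[i]) : ccont f ->
  emb f = fun g => 'i%C * emb (fun x => (complex.Im (f x))%:C%C) g
                    + emb (fun x => (complex.Re (f x))%:C%C) g.
Proof.
case: hemb => lin _ [Re_cont Im_cont].
rewrite -(lin _ _ _ (ccont_real Im_cont) (ccont_real Re_cont)).
by congr emb; apply/funext => x; rewrite addrC -complexE.
Qed.

Lemma Re_emb (f : X -> R[i]) g :
  ccont f -> complex.Re (emb f g) = embR (fun x => complex.Re (f x)) g.
Proof.
move=> f_cont; have [Re_cont Im_cont] := f_cont; rewrite emb_ReIm // /embR.
have := Im_emb_real g Im_cont; case: (emb _ g) => a b /= ->.
by case: (emb _ g) => c d /=; rewrite !mul0r mulr0 subr0 add0r.
Qed.

Lemma Im_emb (f : X -> R[i]) g :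
  ccont f -> complex.Im (emb f g) = embR (fun x => complex.Im (f x)) g.
Proof.
move=> f_cont; have [Re_cont Im_cont] := f_cont; rewrite emb_ReIm // /embR.
have := Im_emb_real g Re_cont; case: (emb _ g) => a b /=.
by case: (emb _ g) => c d /= ->; rewrite mul0r add0r mul1r addr0.
Qed.

Lemma embR_act (phi : X -> R) k h :
  continuous phi -> embR (fun x => phi (act k x)) h = embR phi (mul k h).
Proof.
case: hemb => _ [_ [_ _ _ equiv]] phi_cont.
have := equiv _ (ccont_real phi_cont) (inv k).
by rewrite (group_invK hG) /embR => ->.
Qed.

Lemma state_embR_one : state (fun phi => embR phi one).
Proof.
case: hemb => lin [_ [emb1 pos _ _]]; split.
- move=> a f1 f2 f1_cont f2_cont; rewrite /embR.
  have -> : (fun x => (a * f1 x + f2 x)%:C%C) =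
      (fun x => a%:C%C * (f1 x)%:C%C + (f2 x)%:C%C).
    by apply/funext => x; rewrite rmorphD rmorphM.
  rewrite (lin _ _ _ (ccont_real f1_cont) (ccont_real f2_cont)) /=.
  by case: (emb _ one) => u v; case: (emb _ one) => p q /=; rewrite mul0r subr0.
- move=> phi phi_cont phi_ge0; rewrite /embR.
  have lift_ge0 x : 0 <= (phi x)%:C%C by rewrite lecR.
  have := pos _ (ccont_real phi_cont) lift_ge0 one.
  by case: (emb _ one) => a b; rewrite lecE => /andP[].
- by rewrite /embR emb1.
Qed.

Lemma approx_dirac_embR (x0 : X) :
  dirac_in_orbit_closure act (fun phi => embR phi one) x0 ->
  forall fs e, (forall phi, phi \in fs -> continuous phi) -> 0 < e ->
    exists h : {classic G}, approx_dirac (fun phi => embR phi h) x0 fs e.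
Proof.
case: hG => _ _ mulg1 _ _ x0_prox fs e fs_cont e_gt0.
have [h near_h] := x0_prox fs e fs_cont e_gt0; exists h => phi fs_phi.
have := near_h phi fs_phi; rewrite embR_act ?mulg1 //; exact: fs_cont.
Qed.

Definition translate_coords (f : X -> R[i]) (D : seq {classic G}) :
    seq (X -> R) :=
  [seq (fun x => complex.Re (f (act k x))) | k <- D] ++
  [seq (fun x => complex.Im (f (act k x))) | k <- D].

Lemma translate_coords_continuous (f : X -> R[i]) (D : seq {classic G}) :
  ccont f -> (forall g, continuous (act g)) ->
  forall phi, phi \in translate_coords f D -> continuous phi.
Proof.
case=> Re_cont Im_cont act_cont phi.
rewrite mem_cat => /orP[] /(@mapP {classic G})[k _ ->] x.
- exact: continuous_comp (act_cont k x) (Re_cont _).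
- exact: continuous_comp (act_cont k x) (Im_cont _).
Qed.

(* By equivariance, [embR _ h] near [delta_x] on these coordinates makes
   [emb f (k h)] close to [f (k x)]. *)
Lemma approx_dirac_large_translate (f : X -> R[i]) (c : R)
    (D : seq {classic G}) (x : X) (h : G) :
  ccont f -> (exists2 k, k \in D & c / 2 < normc (f (act k x))) ->
  approx_dirac (fun phi => embR phi h) x (translate_coords f D) (c / 8) ->
  exists2 k, k \in D & c / 4 <= normc (emb f (mul k h)).
Proof.
move=> f_cont [k kD large] near_h; exists k => //.
have [Re_cont Im_cont] := f_cont.
have coord_Re : (fun x => complex.Re (f (act k x))) \in translate_coords f D.
  by rewrite mem_cat; apply/orP; left; apply/(@mapP {classic G}); exists k.
have coord_Im : (fun x => complex.Im (f (act k x))) \in translate_coords f D.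
  by rewrite mem_cat; apply/orP; right; apply/(@mapP {classic G}); exists k.
have := @normc_approx _ (f (act k x)) (emb f (mul k h)) (c / 8).
rewrite Re_emb // Im_emb // -!embR_act //.
move=> /(_ (near_h _ coord_Re) (near_h _ coord_Im)).
by rewrite mulr2n; lra.
Qed.

End Embedding.


Theorem proposition3p10 (R : realType) (G : Type) (mul : G -> G -> G) (one : G)
    (inv : G -> G) (hG : is_group mul one inv)
    (nonamen : ~ amenable R mul inv)
    (X : topologicalType) (act : G -> X -> X)
    (hX : furstenberg_boundary R mul one act)
    (iota : (X -> R[i]) -> (G -> R[i]))
    (hiota : upi_equivariant_embedding mul inv act iota) :
  forall f : X -> R[i], ccont f -> c0 (iota f) -> iota f = (fun _ => 0).
Proof.
move=> f f_cont f_c0.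
have [->|f_neq0] := pselect (f = fun _ => 0); first exact: (emb_cst hiota).
have /existsNP[x1 /eqP/normc_gt0 c_gt0] : ~ forall x, f x = 0.
  by move=> f_eq0; apply: f_neq0; apply/funext.
set c := normc (f x1) in c_gt0.
have [[[cptX _ _ [_ _ act_cont]] [minimal proximal]] _] := hX.
have [D coverD] : exists D : {fset {classic G}},
    forall x, exists2 k, k \in D & c / 2 < normc (f (act k x)).
  apply: (@minimal_finite_translates_cover _ _ _
            ((fun x => normc (f x)) @^-1` [set r | c / 2 < r])) => //.
    by apply: open_comp => [x _|]; [exact: ccont_normc | exact: open_gt].
  by exists x1; rewrite /= -/c; lra.
pose S := [set h | exists2 k, k \in D & c / 4 <= normc (iota f (mul k h))].
have finS : finite_set S.
  by apply: (finite_left_translates hG D (f_c0 (c / 4) _)); lra.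
have near_S x h : approx_dirac (fun phi => embR iota phi h) x
    (translate_coords act f D) (c / 8) -> S h.
  exact: (approx_dirac_large_translate hG hiota f_cont (coverD x)).
have coords_cont := translate_coords_continuous (D := D) f_cont act_cont.
have [x0 /(approx_dirac_embR hG hiota) x0_prox] :=
  proximal _ (state_embR_one one hiota).
have [|t t_dirac] := @dirac_of_finite_approximants _ _ {classic G}
  (fun h phi => embR iota phi h) x0 S _ (c / 8) finS coords_cont _ (near_S x0)
  x0_prox.
  lra.
case: nonamen; apply: (finite_group_amenable hG).
apply: (sub_finite_set _ (finite_right_translate hG t finS)) => g _.
apply: (near_S (act g x0)) => phi /coords_cont phi_cont.
rewrite -(embR_act hG hiota) // t_dirac ?subrr ?normr0; first lra.
by move=> x; exact: continuous_comp (act_cont g x) (phi_cont _).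
Qed.
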